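(* Let $(V,E)$ be a finite connected bipartite graph with sides $S_1,S_2$, every edge having weight $1$ (so $m(v)$ is the degree of $v$), and let $\mathbb{E}$ be a Banach space. Let $P_1,P_2,P_{1,2}$ be the operators on $\ell^2(E;\mathbb{E})$ defined below. Then $P_{1,2}P_i=P_iP_{1,2}=P_{1,2}$ for $i=1,2$, and $$\max\{\|P_1P_2-P_{1,2}\|,\|P_2P_1-P_{1,2}\|\}=\lambda^{\mathbb{E}}_{(V,E),\mathrm{bipartite}}.$$
   Context: $\ell^2(E;\mathbb{E})$ is the space of maps $\Phi:E\to\mathbb{E}$ with $\|\Phi\|^2=\sum_{e\in E}|\Phi(e)|^2$. For $i=1,2$ and an edge $\{v_1,v_2\}$ with $v_1\in S_1,v_2\in S_2$: $P_i\Phi(\{v_1,v_2\})=\frac1{m(v_i)}\sum_{\{v_i,u\}\in E}\Phi(\{v_i,u\})$; and $P_{1,2}\Phi\equiv\frac1{|E|}\sum_{e\in E}\Phi(e)$. $\ell^2(V,m;\mathbb{E})$ is the space of maps $\phi:V\to\mathbb{E}$ with $\|\phi\|^2=\sum_v m(v)|\phi(v)|^2$; the random walk is $(A\phi)(v)=\frac1{m(v)}\sum_{u:\{u,v\}\in E}\phi(u)$; $M_{\mathrm{sides}}\phi(u)=\frac1{m(S_i)}\sum_{w\in S_i}m(w)\phi(w)$ for $u\in S_i$, with $m(S_i)=\sum_{w\in S_i}m(w)$; and $\lambda^{\mathbb{E}}_{(V,E),\mathrm{bipartite}}$ is the operator norm of $A(I-M_{\mathrm{sides}})$ acting by these formulas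 on $\ell^2(V,m;\mathbb{E})$. *)

From HB Require Import structures.
From mathcomp Require Import all_boot all_order all_algebra.
From mathcomp Require Import all_classical all_reals all_analysis.
Set Implicit Arguments. Unset Strict Implicit. Unset Printing Implicit Defensive.
Import Order.TTheory GRing.Theory Num.Theory.
Import numFieldNormedType.Exports.
Local Open Scope classical_set_scope.
Local Open Scope ring_scope.

(* A bipartite simple graph with sides S1 = V1, S2 = V2 is given by a relation
   adj : V1 -> V2 -> bool; vertex set V = V1 + V2 (S1 = inl, S2 = inr);
   edge {v1,v2} (v1 in S1, v2 in S2) is represented by the pair (v1,v2). *)
Section Graph.
Variables (V1 V2 : finType) (adj : V1 -> V2 -> bool).

Definition edgeT : finType := {x : V1 * V2 | adj x.1 x.2}.

Definition vtx : finType := (V1 + V2)%type.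

Definition adjV : rel vtx := fun u v =>
  match u, v with
  | inl a, inr b => adj a b
  | inr b, inl a => adj a b
  | _, _ => false
  end.

Definition connected_graph : Prop := forall u v : vtx, connect adjV u v.

Definition mdeg (v : vtx) : nat := #|[set u | adjV v u]|.

Definition side (v : vtx) : bool := if v is inl _ then true else false.

Variables (R : realType) (E : normedModType R).

Definition opnorm (X : Type) (N : X -> R) (T : X -> X) : R :=
  sup [set N (T x) | x in [set x | N x <= 1]].

Definition l2E (Phi : edgeT -> E) : R := Num.sqrt (\sum_(e : edgeT) `|Phi e| ^+ 2).

Definition P1 (Phi : edgeT -> E) : edgeT -> E := fun e =>
  ((mdeg (inl (val e).1))%:R^-1 : R) *:
    \sum_(e' : edgeT | (val e').1 == (val e).1) Phi e'.

Definition P2 (Phi : edgeT -> E) : edgeT -> E := fun e =>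
  ((mdeg (inr (val e).2))%:R^-1 : R) *:
    \sum_(e' : edgeT | (val e').2 == (val e).2) Phi e'.

Definition P12 (Phi : edgeT -> E) : edgeT -> E := fun _ =>
  ((#|edgeT|)%:R^-1 : R) *: \sum_(e' : edgeT) Phi e'.

Definition l2V (phi : vtx -> E) : R :=
  Num.sqrt (\sum_(v : vtx) (mdeg v)%:R * `|phi v| ^+ 2).

Definition Awalk (phi : vtx -> E) : vtx -> E := fun v =>
  ((mdeg v)%:R^-1 : R) *: \sum_(u | adjV v u) phi u.

Definition Msides (phi : vtx -> E) : vtx -> E := fun u =>
  ((\sum_(w | side w == side u) (mdeg w)%:R)^-1 : R) *:
    \sum_(w | side w == side u) ((mdeg w)%:R : R) *: phi w.

Definition lambda_bip : R :=
  opnorm l2V (fun phi => Awalk (fun v => phi v - Msides phi v)).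

End Graph.

From mathcomp Require Import all_boot all_order all_algebra.
From mathcomp Require Import all_classical all_reals all_analysis.
From mathcomp Require Import lra.
Set Implicit Arguments. Unset Strict Implicit. Unset Printing Implicit Defensive.
Import Order.TTheory GRing.Theory Num.Theory.
Local Open Scope ring_scope.

(* P1, P2 and P12 are conditional averages of an edge function over the fibres
   of the endpoint maps e |-> v1(e), e |-> v2(e) and of the constant map, so
   P12 Pi = Pi P12 = P12 is the tower property.  For a vertex function phi,
   (A (I - M_sides) phi)(v1(e)) = ((P1 P2 - P12) Psi)(e) with Psi(e) = phi(v2(e)),
   and symmetrically on S2.  Since the squared degree-weighted norm of phi is the
   sum of the squared l^2(E) norms of phi(v1 _) and phi(v2 _), lambda is at most
   the larger of the norms of P1 P2 - P12 and P2 P1 - P12.  Conversely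
   (P1 P2 - P12) Phi is A (I - M_sides) psi read along v1, where psi is 0 on S1
   and the P2-average of Phi on S2, and |psi| <= |Phi| by Cauchy-Schwarz. *)

Lemma sqr_sum_le_card (R : realDomainType) (I : finType) (P : pred I) (x : I -> R) :
  (\sum_(i | P i) x i) ^+ 2 <= #|P|%:R * \sum_(i | P i) x i ^+ 2.
Proof.
have -> : #|P|%:R * \sum_(i | P i) x i ^+ 2 = \sum_(i | P i) \sum_(j | P j) x j ^+ 2.
  by rewrite -sumr_const mulr_suml; apply: eq_bigr => i _; rewrite mul1r.
have -> : (\sum_(i | P i) x i) ^+ 2 = \sum_(i | P i) \sum_(j | P j) x i * x j.
  by rewrite expr2 mulr_suml; apply: eq_bigr => i _; rewrite mulr_sumr.
rewrite -(ler_pMn2r (ltn0Sn 1)) [X in _ <= X]mulr2n.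
rewrite [X in _ <= _ + X]exchange_big mulr2n -!big_split /=.
apply: ler_sum => i _; rewrite -!big_split /=; apply: ler_sum => j _.
by have := sqr_ge0 (x i - x j); rewrite sqrrB; lra.
Qed.

Section SquareNorm.
Variables (R : realFieldType) (E : normedModType R) (I : finType).
Implicit Types (Phi Psi : I -> E).

Definition sqnorm Phi : R := \sum_i `|Phi i| ^+ 2.

Lemma sqnorm_ge0 Phi : 0 <= sqnorm Phi.
Proof. by apply: sumr_ge0 => i _; apply: sqr_ge0. Qed.

Lemma sqnorm0 : sqnorm 0 = 0.
Proof. by rewrite /sqnorm big1 // => i _; rewrite normr0 expr0n. Qed.

Lemma sqnormZ (k : R) Phi : sqnorm (k *: Phi) = k ^+ 2 * sqnorm Phi.
Proof.
rewrite /sqnorm mulr_sumr; apply: eq_bigr => i _.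
by rewrite scalrfctE normrZ exprMn real_normK ?num_real.
Qed.

Lemma sqnormB_le Phi Psi : sqnorm (Phi - Psi) <= 2 * (sqnorm Phi + sqnorm Psi).
Proof.
rewrite /sqnorm opprfctE addrfctE -big_split mulr_sumr /=; apply: ler_sum => i _.
apply: (@le_trans _ _ ((`|Phi i| + `|Psi i|) ^+ 2)).
  by rewrite lerXn2r ?nnegrE ?addr_ge0 // ler_normB.
by have := sqr_ge0 (`|Phi i| - `|Psi i|); rewrite sqrrB sqrrD; lra.
Qed.

Lemma card_mul_sqr_norm_avg (P : pred I) Phi :
  #|P|%:R * `|#|P|%:R^-1 *: \sum_(i | P i) Phi i| ^+ 2 <= \sum_(i | P i) `|Phi i| ^+ 2.
Proof.
have [->|n_neq0] := eqVneq #|P| 0%N.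
  by rewrite mul0r sumr_ge0 // => i _; apply: sqr_ge0.
have n_gt0 : 0 < #|P|%:R :> R by rewrite ltr0n lt0n.
rewrite normrZ ger0_norm ?invr_ge0 ?ler0n // exprMn mulrA.
have -> : #|P|%:R * #|P|%:R^-1 ^+ 2 = #|P|%:R^-1 :> R.
  by rewrite expr2 mulrA mulfV ?mul1r // gt_eqF.
rewrite ler_pdivrMl //; apply: le_trans (sqr_sum_le_card P _).
by rewrite lerXn2r ?nnegrE ?sumr_ge0 // ler_norm_sum.
Qed.

End SquareNorm.

Section FibreAverage.
Variables (R : realFieldType) (E : normedModType R) (I : finType).
Implicit Types (Phi Psi : I -> E).

Definition fibre_card (J : finType) (pi : I -> J) (j : J) : nat :=
  #|[pred i | pi i == j]|.

Definition fibre_avg (J : finType) (pi : I -> J) Phi (j : J) : E :=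
  (fibre_card pi j)%:R^-1 *: \sum_(i | pi i == j) Phi i.

Definition cond_avg (J : finType) (pi : I -> J) Phi : I -> E :=
  fun i => fibre_avg pi Phi (pi i).

Variables (J : finType) (pi : I -> J).

Lemma partition_fibres (M : nmodType) (Q : pred J) (F : I -> M) :
  \sum_(i | Q (pi i)) F i = \sum_(j | Q j) \sum_(i | pi i == j) F i.
Proof.
rewrite (partition_big pi Q) //=; apply: eq_bigr => j Qj; apply: eq_bigl => i.
by case: eqP => [->|]; rewrite ?Qj ?andbF.
Qed.

Lemma sum_fibre_const (M : nmodType) (x : M) j :
  \sum_(i | pi i == j) x = x *+ fibre_card pi j.
Proof. by rewrite -sumr_const; apply: eq_bigl => i; rewrite unfold_in. Qed.

Lemma sum_comp_fibre (M : nmodType) (Q : pred J) (g : J -> M) :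
  \sum_(i | Q (pi i)) g (pi i) = \sum_(j | Q j) g j *+ fibre_card pi j.
Proof.
rewrite partition_fibres; apply: eq_bigr => j _.
by rewrite -sum_fibre_const; apply: eq_bigr => i /eqP ->.
Qed.

Lemma fibre_card_gt0 i : (0 < fibre_card pi (pi i))%N.
Proof. by apply/card_gt0P; exists i; rewrite unfold_in /=. Qed.

Lemma sum_empty_fibre Phi j :
  fibre_card pi j = 0%N -> \sum_(i | pi i == j) Phi i = 0.
Proof. by move=> /card0_eq pi0; rewrite big_pred0 // => i; rewrite -[_ == _]pi0. Qed.

Lemma sum_fibre_avg (Q : pred J) Phi :
  \sum_(i | Q (pi i)) fibre_avg pi Phi (pi i) = \sum_(i | Q (pi i)) Phi i.
Proof.
rewrite sum_comp_fibre partition_fibres; apply: eq_bigr => j _.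
rewrite /fibre_avg -scaler_nat scalerA.
have [/(sum_empty_fibre Phi)->|n_neq0] := eqVneq (fibre_card pi j) 0%N.
  by rewrite scaler0.
by rewrite mulfV ?scale1r // pnatr_eq0.
Qed.

Lemma cond_avg_comp (g : J -> E) : cond_avg pi (g \o pi) = g \o pi.
Proof.
apply/funext => i; rewrite /cond_avg /fibre_avg /=.
rewrite (eq_bigr (fun _ => g (pi i))) => [|i' /eqP -> //].
rewrite sum_fibre_const -scaler_nat scalerA mulVf ?scale1r //.
by rewrite pnatr_eq0 -lt0n fibre_card_gt0.
Qed.

Lemma cond_avgZ (k : R) Phi : cond_avg pi (k *: Phi) = k *: cond_avg pi Phi.
Proof.
apply/funext => i; rewrite /cond_avg /fibre_avg /=.
by rewrite !scalrfctE -scaler_sumr !scalerA mulrC.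
Qed.

Lemma cond_avgB Phi Psi : cond_avg pi (Phi - Psi) = cond_avg pi Phi - cond_avg pi Psi.
Proof.
apply/funext => i; rewrite /cond_avg /fibre_avg !opprfctE !addrfctE /=.
by rewrite sumrB scalerBr.
Qed.

Section Tower.
Variables (K : finType) (h : J -> K).

Lemma cond_avg_coarse Phi : cond_avg pi (cond_avg (h \o pi) Phi) = cond_avg (h \o pi) Phi.
Proof. exact: (cond_avg_comp (fun j => fibre_avg (h \o pi) Phi (h j))). Qed.

Lemma cond_avg_tower Phi : cond_avg (h \o pi) (cond_avg pi Phi) = cond_avg (h \o pi) Phi.
Proof.
apply/funext => i; rewrite /cond_avg /fibre_avg.
by rewrite (sum_fibre_avg (fun j => h j == h (pi i))).
Qed.

End Tower.

Lemma sqnorm_comp (g : J -> E) :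
  sqnorm (g \o pi) = \sum_j (fibre_card pi j)%:R * `|g j| ^+ 2.
Proof.
rewrite /sqnorm (sum_comp_fibre xpredT (fun j => `|g j| ^+ 2)).
by apply: eq_bigr => j _; rewrite mulr_natl.
Qed.

Lemma sqnorm_cond_avg Phi : sqnorm (cond_avg pi Phi) <= sqnorm Phi.
Proof.
rewrite [sqnorm (cond_avg _ _)](sqnorm_comp (fibre_avg pi Phi)).
rewrite /sqnorm (partition_fibres xpredT); apply: ler_sum => j _.
exact: (card_mul_sqr_norm_avg [pred i | pi i == j]).
Qed.

End FibreAverage.

Notation mean := (cond_avg (fun _ => tt)).

Lemma mean_comp (R : realFieldType) (E : normedModType R) (I J : finType) (pi : I -> J)
    (g : J -> E) (i : I) :
  mean (g \o pi) i =
  (\sum_j (fibre_card pi j)%:R)^-1 *: \sum_j (fibre_card pi j)%:R *: g j.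
Proof.
have card_tt : (fibre_card (fun _ : I => tt) tt)%:R = \sum_j (fibre_card pi j)%:R :> R.
  by rewrite -sum_fibre_const (sum_comp_fibre pi xpredT (fun _ => 1)).
rewrite /cond_avg /fibre_avg card_tt (sum_comp_fibre pi xpredT g).
by congr (_ *: _); apply: eq_bigr => j _; rewrite scaler_nat.
Qed.

Section AverageDefect.
Variables (R : realFieldType) (E : normedModType R) (I J K : finType).
Variables (pi : I -> J) (sigma : I -> K).
Implicit Types (Phi : I -> E).

Definition avg_defect Phi : I -> E := cond_avg pi (cond_avg sigma Phi) - mean Phi.

Lemma avg_defectZ (k : R) Phi : avg_defect (k *: Phi) = k *: avg_defect Phi.
Proof. by rewrite /avg_defect !cond_avgZ scalerBr. Qed.

Lemma avg_defect0 : avg_defect 0 = 0.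
Proof. by rewrite -(scale0r (0 : I -> E)) avg_defectZ !scale0r. Qed.

Lemma avg_defect_cond_avg Phi : avg_defect (cond_avg sigma Phi) = avg_defect Phi.
Proof.
rewrite /avg_defect (cond_avg_comp sigma (fibre_avg sigma Phi)).
by rewrite (cond_avg_tower sigma (fun _ => tt)).
Qed.

Lemma avg_defect_comp (g : K -> E) :
  avg_defect (g \o sigma) = cond_avg pi (g \o sigma - mean (g \o sigma)).
Proof.
by rewrite /avg_defect cond_avgB cond_avg_comp (cond_avg_coarse pi (fun _ => tt)).
Qed.

Lemma sqnorm_avg_defect_le Phi : sqnorm (avg_defect Phi) <= 4 * sqnorm Phi.
Proof.
apply: le_trans (sqnormB_le _ _) _.
have := sqnorm_cond_avg pi (cond_avg sigma Phi); have := sqnorm_cond_avg sigma Phi.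
have := sqnorm_cond_avg (fun _ => tt) Phi; lra.
Qed.

End AverageDefect.

Section L2Norm.
Variables (R : rcfType) (E : normedModType R) (I : finType).
Implicit Types (Phi : I -> E).

Definition l2norm Phi : R := Num.sqrt (sqnorm Phi).

Lemma l2norm_ge0 Phi : 0 <= l2norm Phi.
Proof. exact: sqrtr_ge0. Qed.

Lemma l2norm0 : l2norm 0 = 0.
Proof. by rewrite /l2norm sqnorm0 sqrtr0. Qed.

Lemma l2normZ (k : R) Phi : l2norm (k *: Phi) = `|k| * l2norm Phi.
Proof. by rewrite /l2norm sqnormZ sqrtrM ?sqr_ge0 // sqrtr_sqr. Qed.

Lemma l2norm_avg_defect_le (J K : finType) (pi : I -> J) (sigma : I -> K) Phi :
  l2norm (avg_defect pi sigma Phi) <= 2 * l2norm Phi.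
Proof.
rewrite /l2norm -(ger0_norm (ler0n R 2)) -sqrtr_sqr -sqrtrM ?sqr_ge0 //.
by rewrite ler_sqrt ?mulr_ge0 ?sqnorm_ge0 // -natrX sqnorm_avg_defect_le.
Qed.

End L2Norm.

Section OperatorNorm.
Variables (R : realType) (X : lmodType R) (N : X -> R).
Hypotheses (N_ge0 : forall x, 0 <= N x) (N0 : N 0 = 0).
Variable T : X -> X.

Lemma opnorm_le d : (forall x, N x <= 1 -> N (T x) <= d) -> opnorm N T <= d.
Proof.
move=> Td; apply: ge_sup => [|_ [x /= x_le1 <-]]; last exact: Td.
by exists (N (T 0)), 0 => //=; rewrite N0 ler01.
Qed.

Variable c : R.
Hypothesis T_bounded : forall x, N (T x) <= c * N x.

Lemma opnorm_le_bound : 0 <= c -> opnorm N T <= c.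
Proof.
move=> c_ge0; apply: opnorm_le => x x_le1; apply: le_trans (T_bounded x) _.
by rewrite -[leRHS]mulr1 ler_wpM2l.
Qed.

Lemma ler_opnorm x : N x <= 1 -> N (T x) <= opnorm N T.
Proof.
move=> x_le1; apply: ub_le_sup; last by exists x.
exists `|c| => _ [y /= y_le1 <-]; apply: le_trans (T_bounded y) _.
by rewrite -[leRHS]mulr1 (le_trans (ler_wpM2r _ (ler_norm c))) ?ler_wpM2l.
Qed.

Lemma opnorm_ge0 : 0 <= opnorm N T.
Proof. by apply: le_trans (ler_opnorm (x := 0) _); rewrite ?N0 ?ler01. Qed.

Hypotheses (NZ : forall k x, N (k *: x) = `|k| * N x)
           (TZ : forall k x, T (k *: x) = k *: T x).

Lemma ler_opnormM x : N (T x) <= opnorm N T * N x.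
Proof.
have [Nx0|Nx_gt0] := eqVneq (N x) 0.
  by rewrite Nx0 mulr0; apply: le_trans (T_bounded x) _; rewrite Nx0 mulr0.
have Nx_pos : 0 < N x by rewrite lt0r Nx_gt0 N_ge0.
have := ler_opnorm (x := (N x)^-1 *: x).
rewrite TZ !NZ ger0_norm ?invr_ge0 // mulVf // lexx => /(_ isT) bound.
by rewrite -ler_pdivrMr // mulrC.
Qed.

End OperatorNorm.

Section AverageDefectNorm.
Variables (R : realType) (E : normedModType R) (I J K : finType).
Variables (pi : I -> J) (sigma : I -> K).

Local Notation N := (@l2norm _ E I).
Let bounded := @l2norm_avg_defect_le _ E I J K pi sigma.

Lemma opnorm_avg_defect_ge0 : 0 <= opnorm N (avg_defect pi sigma).
Proof. exact: (opnorm_ge0 (@l2norm_ge0 _ E I) (@l2norm0 _ E _) bounded). Qed.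

Lemma sqnorm_avg_defect_le_opnorm (Phi : I -> E) :
  sqnorm (avg_defect pi sigma Phi) <=
    opnorm N (avg_defect pi sigma) ^+ 2 * sqnorm Phi.
Proof.
have := ler_opnormM (@l2norm_ge0 _ E I) bounded (@l2normZ _ E I) (avg_defectZ pi sigma) Phi.
rewrite /l2norm -[X in _ <= X * _]ger0_norm ?opnorm_avg_defect_ge0 //.
by rewrite -sqrtr_sqr -sqrtrM ?sqr_ge0 // ler_sqrt // mulr_ge0 ?sqr_ge0 ?sqnorm_ge0.
Qed.

End AverageDefectNorm.

Section BipartiteGraph.
Variables (V1 V2 : finType) (adj : V1 -> V2 -> bool).
Local Notation ET := (edgeT adj).

Definition end1 (e : ET) : V1 := (val e).1.
Definition end2 (e : ET) : V2 := (val e).2.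

Lemma sum_edges (M : nmodType) (F : V1 * V2 -> M) :
  \sum_(e : ET) F (val e) = \sum_(x | adj x.1 x.2) F x.
Proof.
rewrite (reindex_omap (val : ET -> V1 * V2) insub) => [|x adj_x]; last by rewrite insubT.
by apply: eq_bigl => e; rewrite valK eqxx andbT (valP e).
Qed.

Lemma sum_edges_at1 (M : nmodType) a (f : V2 -> M) :
  \sum_(e | end1 e == a) f (end2 e) = \sum_(b | adj a b) f b.
Proof.
rewrite big_mkcond (sum_edges (fun x => if x.1 == a then f x.2 else 0)).
rewrite -(pair_big_dep xpredT adj (fun i j => if i == a then f j else 0)) /=.
rewrite (bigD1 a) //= [X in _ + X]big1 ?addr0 => [|i /negbTE i_neq_a]; last first.
  by apply: big1 => j _; rewrite i_neq_a.
by apply: eq_bigr => b _; rewrite eqxx.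
Qed.

Lemma sum_edges_at2 (M : nmodType) b (f : V1 -> M) :
  \sum_(e | end2 e == b) f (end1 e) = \sum_(a | adj a b) f a.
Proof.
rewrite big_mkcond (sum_edges (fun x => if x.2 == b then f x.1 else 0)).
rewrite -(pair_big_dep xpredT adj (fun i j => if j == b then f i else 0)) /=.
rewrite [RHS]big_mkcond; apply: eq_bigr => a _.
rewrite big_mkcond (bigD1 b) //= eqxx [X in _ + X]big1 ?addr0 // => j /negbTE ->.
by case: (adj a j).
Qed.

Lemma sum_nbr_inl (M : nmodType) a (g : vtx V1 V2 -> M) :
  \sum_(u | adjV adj (inl a) u) g u = \sum_(e | end1 e == a) g (inr (end2 e)).
Proof. by rewrite (sum_edges_at1 a (g \o inr)) big_sumType /= big_pred0 // add0r. Qed.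

Lemma sum_nbr_inr (M : nmodType) b (g : vtx V1 V2 -> M) :
  \sum_(u | adjV adj (inr b) u) g u = \sum_(e | end2 e == b) g (inl (end1 e)).
Proof.
by rewrite (sum_edges_at2 b (g \o inl)) big_sumType /= [X in _ + X]big_pred0 // addr0.
Qed.

(* [mdeg] is the cardinal of a classical set, whence the [asboolb] steps. *)
Lemma mdeg_inl a : mdeg adj (inl a) = fibre_card end1 a.
Proof.
rewrite /mdeg /fibre_card -!sum1_card (eq_bigl (adjV adj (inl a))) => [|u]; last first.
  by rewrite unfold_in /= asboolb.
by rewrite (sum_nbr_inl a (fun _ => 1%N)); apply: eq_bigl => e; rewrite inE.
Qed.

Lemma mdeg_inr b : mdeg adj (inr b) = fibre_card end2 b.
Proof.
rewrite /mdeg /fibre_card -!sum1_card (eq_bigl (adjV adj (inr b))) => [|u]; last first.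
  by rewrite unfold_in /= asboolb.
by rewrite (sum_nbr_inr b (fun _ => 1%N)); apply: eq_bigl => e; rewrite inE.
Qed.

Variables (R : realType) (E : normedModType R).
Implicit Types (phi : vtx V1 V2 -> E) (Phi : ET -> E).

Lemma P1E : @P1 V1 V2 adj R E = cond_avg end1.
Proof. by apply/funext => Phi; apply/funext => e; rewrite /P1 mdeg_inl. Qed.

Lemma P2E : @P2 V1 V2 adj R E = cond_avg end2.
Proof. by apply/funext => Phi; apply/funext => e; rewrite /P2 mdeg_inr. Qed.

Lemma P12E : @P12 V1 V2 adj R E = mean.
Proof.
apply/funext => Phi; apply/funext => e; rewrite /P12 /cond_avg /fibre_avg /fibre_card.
by congr (_%:R^-1 *: _).
Qed.

Definition centred_walk (phi : vtx V1 V2 -> E) : vtx V1 V2 -> E :=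
  Awalk adj (fun v => phi v - Msides adj phi v).

Lemma Msides_inl phi a (e : ET) : Msides adj phi (inl a) = mean (phi \o inl \o end1) e.
Proof.
rewrite (mean_comp end1 (phi \o inl)) /Msides !big_sumType /= !big_pred0_eq !addr0.
by congr (_^-1 *: _); apply: eq_bigr => a' _; rewrite mdeg_inl.
Qed.

Lemma Msides_inr phi b (e : ET) : Msides adj phi (inr b) = mean (phi \o inr \o end2) e.
Proof.
rewrite (mean_comp end2 (phi \o inr)) /Msides !big_sumType /= !big_pred0_eq !add0r.
by congr (_^-1 *: _); apply: eq_bigr => b' _; rewrite mdeg_inr.
Qed.

Lemma centred_walk_inl phi e :
  centred_walk phi (inl (end1 e)) = avg_defect end1 end2 (phi \o inr \o end2) e.
Proof.
rewrite avg_defect_comp /centred_walk /Awalk sum_nbr_inl mdeg_inl.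
by congr (_ *: _); apply: eq_bigr => e' _; rewrite (Msides_inr _ _ e').
Qed.

Lemma centred_walk_inr phi e :
  centred_walk phi (inr (end2 e)) = avg_defect end2 end1 (phi \o inl \o end1) e.
Proof.
rewrite avg_defect_comp /centred_walk /Awalk sum_nbr_inr mdeg_inr.
by congr (_ *: _); apply: eq_bigr => e' _; rewrite (Msides_inl _ _ e').
Qed.

Lemma l2VE phi :
  l2V adj phi = Num.sqrt (sqnorm (phi \o inl \o end1) + sqnorm (phi \o inr \o end2)).
Proof.
rewrite /l2V big_sumType (sqnorm_comp end1 (phi \o inl)) (sqnorm_comp end2 (phi \o inr)).
by congr (Num.sqrt (_ + _)); apply: eq_bigr => v _; rewrite ?mdeg_inl ?mdeg_inr.
Qed.

Lemma l2V_centred_walk phi :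
  l2V adj (centred_walk phi) =
  Num.sqrt (sqnorm (avg_defect end1 end2 (phi \o inr \o end2))
            + sqnorm (avg_defect end2 end1 (phi \o inl \o end1))).
Proof.
rewrite l2VE; congr (Num.sqrt (_ + _)); congr sqnorm; apply/funext => e.
  exact: centred_walk_inl.
exact: centred_walk_inr.
Qed.

Local Notation s12 := (opnorm (@l2norm _ E ET) (avg_defect end1 end2)).
Local Notation s21 := (opnorm (@l2norm _ E ET) (avg_defect end2 end1)).

Let l2V_ge0 phi : 0 <= l2V adj phi. Proof. exact: sqrtr_ge0. Qed.

Let l2V0 : l2V adj (0 : vtx V1 V2 -> E) = 0.
Proof. by rewrite /l2V big1 ?sqrtr0 // => v _; rewrite normr0 expr0n mulr0. Qed.

Let max_ge0 : 0 <= Num.max s12 s21.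
Proof. by rewrite le_max opnorm_avg_defect_ge0. Qed.

Lemma l2V_centred_walk_le phi :
  l2V adj (centred_walk phi) <= Num.max s12 s21 * l2V adj phi.
Proof.
rewrite l2V_centred_walk l2VE -[X in X * _]ger0_norm // -sqrtr_sqr -sqrtrM ?sqr_ge0 //.
rewrite ler_sqrt ?mulr_ge0 ?sqr_ge0 ?addr_ge0 ?sqnorm_ge0 //.
have := sqnorm_avg_defect_le_opnorm end1 end2 (phi \o inr \o end2).
have := sqnorm_avg_defect_le_opnorm end2 end1 (phi \o inl \o end1).
have : s12 ^+ 2 <= Num.max s12 s21 ^+ 2.
  by rewrite lerXn2r ?nnegrE ?opnorm_avg_defect_ge0 // le_max lexx.
have : s21 ^+ 2 <= Num.max s12 s21 ^+ 2.
  by rewrite lerXn2r ?nnegrE ?opnorm_avg_defect_ge0 // le_max lexx orbT.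
have := sqnorm_ge0 (phi \o inl \o end1); have := sqnorm_ge0 (phi \o inr \o end2).
nra.
Qed.

Lemma avg_defect12_le_lambda : s12 <= lambda_bip adj E.
Proof.
apply: (opnorm_le (@l2norm0 _ E _)) => Phi Phi_le1.
pose psi (v : vtx V1 V2) : E := if v is inr b then fibre_avg end2 Phi b else 0.
have psi_inl : psi \o inl \o end1 = 0 by [].
have psi_inr : psi \o inr \o end2 = cond_avg end2 Phi by [].
have -> : l2norm (avg_defect end1 end2 Phi) = l2V adj (centred_walk psi).
  by rewrite l2V_centred_walk psi_inl psi_inr avg_defect0 sqnorm0 addr0 avg_defect_cond_avg.
apply: (ler_opnorm l2V_ge0 l2V_centred_walk_le); apply: le_trans Phi_le1.
by rewrite l2VE psi_inl psi_inr sqnorm0 add0r ler_sqrt ?sqnorm_ge0 ?sqnorm_cond_avg.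
Qed.

Lemma avg_defect21_le_lambda : s21 <= lambda_bip adj E.
Proof.
apply: (opnorm_le (@l2norm0 _ E _)) => Phi Phi_le1.
pose psi (v : vtx V1 V2) : E := if v is inl a then fibre_avg end1 Phi a else 0.
have psi_inl : psi \o inl \o end1 = cond_avg end1 Phi by [].
have psi_inr : psi \o inr \o end2 = 0 by [].
have -> : l2norm (avg_defect end2 end1 Phi) = l2V adj (centred_walk psi).
  by rewrite l2V_centred_walk psi_inl psi_inr avg_defect0 sqnorm0 add0r avg_defect_cond_avg.
apply: (ler_opnorm l2V_ge0 l2V_centred_walk_le); apply: le_trans Phi_le1.
by rewrite l2VE psi_inl psi_inr sqnorm0 addr0 ler_sqrt ?sqnorm_ge0 ?sqnorm_cond_avg.
Qed.

Lemma lambda_le_max_opnorm : lambda_bip adj E <= Num.max s12 s21.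
Proof. exact: (opnorm_le_bound l2V0 l2V_centred_walk_le max_ge0). Qed.

End BipartiteGraph.

Theorem proposition2p22 (V1 V2 : finType) (adj : V1 -> V2 -> bool)
  (R : realType) (E : completeNormedModType R) :
  connected_graph adj ->
  (forall Phi : edgeT adj -> E,
      P12 (P1 Phi) = P12 Phi /\ P1 (P12 Phi) = P12 Phi /\
      P12 (P2 Phi) = P12 Phi /\ P2 (P12 Phi) = P12 Phi) /\
  Num.max
    (opnorm (@l2E _ _ adj R E) (fun Phi => fun e => P1 (P2 Phi) e - P12 Phi e))
    (opnorm (@l2E _ _ adj R E) (fun Phi => fun e => P2 (P1 Phi) e - P12 Phi e))
  = lambda_bip adj E.
Proof.
move=> _; rewrite P1E P2E P12E; split=> [Phi|].
  by rewrite !(cond_avg_tower _ (fun _ => tt)) !(cond_avg_coarse _ (fun _ => tt)).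
apply/le_anti; rewrite ge_max (lambda_le_max_opnorm adj E).
by rewrite (avg_defect12_le_lambda adj E) (avg_defect21_le_lambda adj E).
Qed.
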